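(* Let $x_s<x_t$ be integers, let $C\ge 0$, and let $f:[x_s,x_t]\to\mathbb{R}$ be such that $([x_s,x_t],f)$ is an Ameso($C$) pair. If there exist $x'\in[x_s,x_t]$ and $z\in(x',x_t]$ with $f(z)-f(x')\ge C$, then $\min_{y\in[x_s,z]}f(y)=\min_{y\in[x_s,x_t]}f(y)$.
   Context: For integers $a\le b$, $[a,b]$ denotes the set of integers $\{a,\dots,b\}$ and $(a,b]$ the set $\{a+1,\dots,b\}$. Floors and ceilings of vectors are taken componentwise. A set $D^n\subseteq\mathbb{Z}^n$ is an Ameso set if $\lceil(\vec x+\vec y)/2\rceil,\lfloor(\vec x+\vec y)/2\rfloor\in D^n$ for all $\vec x,\vec y\in D^n$. For $C\ge 0$, $(D^n,f)$ is an Ameso($C$) pair if $D^n$ is an Ameso set, $f:D^n\to\mathbb{R}$ is bounded below, and $f(\vec x)+f(\vec y)+C\ge f(\lceil(\vec x+\vec y)/2\rceil)+f(\lfloor(\vec x+\vec y)/2\rfloor)$ for all $\vec x,\vec y\in D^n$. *)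

(* One-dimensional (n = 1) instance of the Ameso notions. *)
From HB Require Import structures.
From mathcomp Require Import all_boot all_order all_algebra.
Set Implicit Arguments. Unset Strict Implicit. Unset Printing Implicit Defensive.
Import Order.TTheory GRing.Theory Num.Theory.
Local Open Scope ring_scope.

Definition floor_mid (x y : int) : int := ((x + y) %/ 2)%Z.
Definition ceil_mid (x y : int) : int := - (((- (x + y)) %/ 2)%Z).

Definition int_itv (a b : int) : pred int := fun x => (a <= x) && (x <= b).

Definition ameso_set (D : pred int) : Prop :=
  forall x y, D x -> D y -> D (ceil_mid x y) /\ D (floor_mid x y).

(* Ameso(C) pair (n = 1); f is a total function on int, only its values on D matter *)
Definition ameso_pair (R : realFieldType) (C : R) (D : pred int) (f : int -> R) : Prop :=
  [/\ ameso_set D,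
      (exists m : R, forall x, D x -> m <= f x) &
      forall x y, D x -> D y ->
        f (ceil_mid x y) + f (floor_mid x y) <= f x + f y + C].

(* min_{y in [a,b]} f y  (for a <= b) *)
Definition int_min (R : realFieldType) (f : int -> R) (a b : int) : R :=
  \big[Num.min/f a]_(i < (`|b - a|%N).+1) f (a + (i : nat)%:Z).

From mathcomp Require Import all_boot all_order all_algebra zify ring lra.
Import Order.TTheory GRing.Theory Num.Theory.
Local Open Scope ring_scope.

(* If [f] is midpoint convex up to [C] on [[a, b]] and [f b < f a], then no
   interior point reaches [f a + C]. Otherwise let [z] be the rightmost
   maximiser of [f] on [(a, b)] and reflect an endpoint through [z]: if [z] is
   nearer to [a], the reflection [2z - a] lies in [(z, b]] and is at least as
   high as [z]; if [z] is nearer to [b], the reflection [2z - b] lies in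
   [(a, z)] and is strictly higher than [z]. Either way the choice of [z] is
   contradicted. In the corollary, a minimiser [w > z] of [f] on [[xs, xt]]
   lying strictly below [min_[xs, z] f <= f x'] would put [x' < z < w] in this
   situation, against [f z >= f x' + C]. *)

Section IntervalExtrema.
Context {R : realFieldType} (f : int -> R).

Lemma int_min_le (a b y : int) : a <= y <= b -> int_min f a b <= f y.
Proof.
move=> y_in.
have lt_idx : (`|y - a|%N < (`|b - a|%N).+1)%N by lia.
have -> : f y = f (a + (Ordinal lt_idx : nat)%:Z) by congr f; rewrite /=; lia.
exact: bigmin_le.
Qed.

Lemma int_min_attained (a b : int) :
  a <= b -> exists2 y, a <= y <= b & int_min f a b = f y.
Proof.
move=> ab; rewrite /int_min; elim/big_rec: _ => [|i m _ [y y_ab ->]].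
  by exists a; rewrite ?lexx.
have := ltn_ord i; set x := a + (i : nat)%:Z => i_lt.
case: leP => _; last by exists y.
by exists x => //; lia.
Qed.

Lemma exists_rightmost_argmax (a b : int) : a <= b ->
  exists2 z, a <= z <= b &
    (forall y, a <= y <= b -> f y <= f z) /\ (forall y, z < y <= b -> f y < f z).
Proof.
move=> ab; have [n ->] : exists n : nat, b = a + n%:Z by exists `|b - a|%N; lia.
elim: n => [|n [z z_in [z_max z_right]]] {ab}.
  exists a; first by rewrite addr0 lexx.
  by split=> y y_in; [have -> : y = a by lia | lia].
have split_y y : a <= y <= a + n.+1%:Z -> a <= y <= a + n%:Z \/ y = a + n.+1%:Z.
  by lia.
case: (leP (f z) (f (a + n.+1%:Z))) => [fz_le|fz_gt].
  exists (a + n.+1%:Z); first by lia.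
  split=> y y_in; last by lia.
  by case: (split_y y y_in) => [/z_max/le_trans->|->].
exists z; first by lia.
split=> y y_in.
  by case: (split_y y y_in) => [/z_max|->] //; exact: ltW.
case: (split_y y ltac:(lia)) => [y_le|->] //.
by apply: z_right; lia.
Qed.

End IntervalExtrema.

Lemma mids_of_double_sum (u w y : int) :
  u + w = y * 2 -> ceil_mid u w = y /\ floor_mid u w = y.
Proof.
by move=> uw; rewrite /ceil_mid /floor_mid uw -mulNr !mulzK // opprK.
Qed.

(* The Ameso inequality restricted to pairs with even sum, where both mids
   coincide with the midpoint. *)
Definition midpoint_convex_on {R : realFieldType} (C : R) (f : int -> R) (a b : int) :=
  forall u w y, a <= u <= b -> a <= w <= b -> u + w = y * 2 ->
    f y *+ 2 <= f u + f w + C.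

Lemma ameso_pair_midpoint_convex {R : realFieldType} (C : R) (f : int -> R) a b :
  ameso_pair C (int_itv a b) f -> midpoint_convex_on C f a b.
Proof.
case=> _ _ ameso u w y u_in w_in /mids_of_double_sum[ceil_uw floor_uw].
by rewrite mulr2n -{1}ceil_uw -floor_uw; apply: ameso.
Qed.

Lemma midpoint_convex_onS {R : realFieldType} (C : R) (f : int -> R) a b a' b' :
  a <= a' -> b' <= b -> midpoint_convex_on C f a b -> midpoint_convex_on C f a' b'.
Proof.
move=> aa' b'b convex u w y u_in w_in; apply: convex; lia.
Qed.

Lemma midpoint_convex_descent_lt {R : realFieldType} (C : R) (f : int -> R) (a b : int) :
  0 <= C -> midpoint_convex_on C f a b ->
  f b < f a -> forall z, a < z < b -> f z < f a + C.
Proof.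
move=> C_ge0 convex fba z0 z0_in; rewrite ltNge; apply/negP => fz0_ge.
have [|z z_in [z_max z_right]] := exists_rightmost_argmax f (a + 1) (b - 1).
  by lia.
have fz_ge : f a + C <= f z by apply: le_trans fz0_ge (z_max _ _); lia.
have [near_a|near_b] := lerP (z - a) (b - z).
- pose w := z * 2 - a.
  have fw : f z *+ 2 <= f a + f w + C.
    by apply: convex; rewrite /w; [lia | lia | ring].
  have fz_le_fw : f z <= f w by lra.
  have [w_b|w_lt_b] : w = b \/ w <= b - 1 by rewrite /w; lia.
    by move: fz_le_fw; rewrite w_b; lra.
  by have := z_right w ltac:(rewrite /w; lia); lra.
- pose u := z * 2 - b.
  have fu : f z *+ 2 <= f u + f b + C.
    by apply: convex; rewrite /u; [lia | lia | ring].
  by have := z_max u ltac:(rewrite /u; lia); lra.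
Qed.

Theorem corollary2 (R : realFieldType) (xs xt : int) (C : R) (f : int -> R)
    (x' z : int) :
  xs < xt -> 0 <= C ->
  ameso_pair C (int_itv xs xt) f ->
  xs <= x' <= xt -> x' < z <= xt -> f z - f x' >= C ->
  int_min f xs z = int_min f xs xt.
Proof.
move=> _ C_ge0 /ameso_pair_midpoint_convex convex x'_in z_in fz_ge.
apply/le_anti/andP; split; last first.
  have [y y_in ->] := @int_min_attained _ f xs z ltac:(lia).
  by apply: int_min_le; lia.
have [w w_in ->] := @int_min_attained _ f xs xt ltac:(lia).
have [w_le_z|z_lt_w] := lerP w z; first by apply: int_min_le; lia.
rewrite leNgt; apply/negP => fw_lt_min.
have fw_lt_fx' : f w < f x'.
  by apply: (lt_le_trans fw_lt_min); apply: int_min_le; lia.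
have convex_x'w : midpoint_convex_on C f x' w.
  by apply: midpoint_convex_onS convex; lia.
have := midpoint_convex_descent_lt C f x' w C_ge0 convex_x'w fw_lt_fx' z ltac:(lia).
lra.
Qed.
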